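(* Let $G=(V,E)$ be a graph with a partition $(A,B)$ of its vertex set. Let $G_1=(V,E_1)$ with $E_1=E\cup\{\{a,b\}: a,b\in B,\ a\neq b\}$. Then $\mathrm{box}(G_1)\le 2\,\mathrm{box}(G)$.
   Context: An interval graph is the intersection graph of a finite family of intervals of the real line. A box representation of dimension $k$ of $G=(V,E)$ is a family of $k$ interval graphs $I_1,\dots,I_k$ on vertex set $V$ with $E=E(I_1)\cap\cdots\cap E(I_k)$; the boxicity $\mathrm{box}(G)$ is the minimum such $k$. *)

From Stdlib Require Import Reals.
From mathcomp Require Import all_boot.
Set Implicit Arguments. Unset Strict Implicit. Unset Printing Implicit Defensive.

Definition simple_graph (V : finType) (e : rel V) : Prop :=
  irreflexive e /\ symmetric e.

(* Interval graph: intersection graph of a family of closed real intervals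
   [l v, r v] indexed by the vertices. *)
Definition interval_graph (V : finType) (e : rel V) : Prop :=
  simple_graph e /\
  exists l r : V -> R, (forall v, Rle (l v) (r v)) /\
    forall u v, u != v ->
      (e u v <-> Rle (Rmax (l u) (l v)) (Rmin (r u) (r v))).

(* A box representation of dimension k of e: k interval graphs on V whose
   edge sets intersect to the edge set of e. *)
Definition box_rep (V : finType) (e : rel V) (k : nat) (I : 'I_k -> rel V) : Prop :=
  (forall i, interval_graph (I i)) /\
  forall u v, u != v -> (e u v <-> forall i, I i u v).

Definition has_box_rep (V : finType) (e : rel V) (k : nat) : Prop :=
  exists I : 'I_k -> rel V, @box_rep V e k I.

Definition is_boxicity (V : finType) (e : rel V) (b : nat) : Prop :=
  has_box_rep e b /\ forall k, has_box_rep e k -> b <= k.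

Definition add_clique (V : finType) (e : rel V) (B : {set V}) : rel V :=
  fun u v => e u v || [&& u \in B, v \in B & u != v].

(* Stretch every interval of a vertex of B to the far left in one copy of an
   interval graph, and to the far right in a second copy.  Two stretched
   intervals of B always meet, while a pair with a vertex outside B meets in
   both copies exactly when the original intervals meet.  Hence each interval
   graph of a box representation of G, with B made a clique, is the
   intersection of two interval graphs, and doubling the dimension suffices. *)
From Stdlib Require Import Reals Lra.
From mathcomp Require Import all_boot.
Set Implicit Arguments. Unset Strict Implicit. Unset Printing Implicit Defensive.

Definition Rleb (x y : R) : bool := if Rle_dec x y then true else false.

Lemma RlebP (x y : R) : reflect (Rle x y) (Rleb x y).
Proof. by rewrite /Rleb; case: Rle_dec => H; constructor. Qed.

Definition interval_rel (V : finType) (l r : V -> R) : rel V :=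
  fun u v => (u != v) && Rleb (Rmax (l u) (l v)) (Rmin (r u) (r v)).

Lemma interval_rel_interval_graph (V : finType) (l r : V -> R) :
  (forall v, Rle (l v) (r v)) -> interval_graph (interval_rel l r).
Proof.
move=> lr; split; [split|].
- by move=> u; rewrite /interval_rel eqxx.
- by move=> u v; rewrite /interval_rel eq_sym Rmax_comm Rmin_comm.
- exists l, r; split=> // u v uv; rewrite /interval_rel uv.
  by split=> /RlebP.
Qed.

Lemma intervals_meet (a c b d : R) : Rle a c -> Rle b d ->
  (Rle (Rmax a b) (Rmin c d) <-> Rle a d /\ Rle b c).
Proof. by rewrite /Rmax /Rmin => *; do 2 case: Rle_dec; split; lra. Qed.

Lemma finite_lower_bound (V : finType) (f : V -> R) :
  exists m, forall v, Rle m (f v).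
Proof.
suff [m mP] : exists m, forall v, v \in enum V -> Rle m (f v).
  by exists m => v; apply: mP; rewrite mem_enum.
elim: (enum V) => [|x s [m mP]]; first by exists R0.
exists (Rmin (f x) m) => v; rewrite in_cons => /orP[/eqP-> | /mP]; first exact: Rmin_l.
by apply: Rle_trans; apply: Rmin_r.
Qed.

Lemma finite_upper_bound (V : finType) (f : V -> R) :
  exists M, forall v, Rle (f v) M.
Proof.
have [m mP] := finite_lower_bound (fun v => Ropp (f v)).
by exists (Ropp m) => v; have := mP v; lra.
Qed.

Section StretchIntervals.

Variables (V : finType) (B : {set V}) (l r : V -> R) (m M : R).
Hypotheses (lr : forall v, Rle (l v) (r v)) (ml : forall v, Rle m (l v))
  (rM : forall v, Rle (r v) M).

Definition stretch_left (v : V) : R := if v \in B then m else l v.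
Definition stretch_right (v : V) : R := if v \in B then M else r v.

Lemma stretch_left_le v : Rle (stretch_left v) (r v).
Proof. by rewrite /stretch_left; case: ifP => // _; apply: Rle_trans (ml v) (lr v). Qed.

Lemma stretch_right_ge v : Rle (l v) (stretch_right v).
Proof. by rewrite /stretch_right; case: ifP => // _; apply: Rle_trans (lr v) (rM v). Qed.

Lemma interval_rel_stretch u v : u != v ->
  (interval_rel stretch_left r u v /\ interval_rel l stretch_right u v)
  <-> interval_rel l r u v \/ (u \in B) && (v \in B).
Proof.
move=> uv; rewrite /interval_rel uv /=.
rewrite -!(rwP (RlebP _ _)).
rewrite (intervals_meet (stretch_left_le u) (stretch_left_le v)).
rewrite (intervals_meet (stretch_right_ge u) (stretch_right_ge v)).
rewrite (intervals_meet (lr u) (lr v)) /stretch_left /stretch_right.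
move: (ml u) (ml v) (rM u) (rM v) (lr u) (lr v).
case: (u \in B); case: (v \in B) => /= *; first by split=> _; [right | lra].
all: by split; intuition (try lra; try discriminate).
Qed.

End StretchIntervals.

Lemma interval_graph_add_clique (V : finType) (I : rel V) (B : {set V}) :
  interval_graph I -> exists I1 I2, [/\ interval_graph I1, interval_graph I2 &
    forall u v, u != v -> (add_clique I B u v <-> I1 u v /\ I2 u v)].
Proof.
case=> _ [l [r [lr Irep]]].
have [m ml] := finite_lower_bound l; have [M rM] := finite_upper_bound r.
exists (interval_rel (stretch_left B l m) r), (interval_rel l (stretch_right B r M)).
split; try apply: interval_rel_interval_graph.
- exact: stretch_left_le.
- exact: stretch_right_ge.
move=> u v uv; rewrite interval_rel_stretch // /add_clique uv andbT.
rewrite /interval_rel uv -(rwP (RlebP _ _)) -Irep //.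
by split=> /orP.
Qed.

Lemma has_box_rep_add_clique (V : finType) (e : rel V) (B : {set V}) (k : nat) :
  has_box_rep e k -> has_box_rep (add_clique e B) (k + k).
Proof.
case=> I [Iint erep].
have /fin_all_exists [I1 I1P] : forall j, exists I1, exists I2,
    [/\ interval_graph I1, interval_graph I2 &
      forall u v, u != v -> (add_clique (I j) B u v <-> I1 u v /\ I2 u v)].
  by move=> j; apply: interval_graph_add_clique.
have /fin_all_exists [I2 I12P] := I1P.
exists (fun i => match split i with inl j => I1 j | inr j => I2 j end); split.
  by move=> i; case: (split i) => j; case: (I12P j).
move=> u v uv.
have clique_rep : add_clique e B u v <-> forall j, add_clique (I j) B u v.
  rewrite /add_clique uv andbT; case: ((u \in B) && (v \in B)).
    by rewrite orbT; split=> // _ j; rewrite orbT.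
  by rewrite orbF erep //; split=> H j; move: (H j); rewrite orbF.
rewrite clique_rep; split=> [H i | H j].
- by case: (split i) => j; case: (I12P j) => _ _ /(_ u v uv) /proj1 /(_ (H j)) [].
- case: (I12P j) => _ _ -> //; split.
  + by have := H (unsplit (inl j)); rewrite unsplitK.
  + by have := H (unsplit (inr j)); rewrite unsplitK.
Qed.

Theorem lemma5 (V : finType) (e : rel V) (A B : {set V}) :
  simple_graph e ->
  A :&: B = set0 -> A :|: B = [set: V] ->
  forall b b1 : nat,
    is_boxicity e b -> is_boxicity (add_clique e B) b1 ->
    b1 <= 2 * b.
Proof.
move=> _ _ _ b b1 [eb _] [_ b1_min].
by rewrite mul2n -addnn; apply/b1_min/has_box_rep_add_clique.
Qed.
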